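(* Assume (i) the Singer family hypothesis: for every prime $p$ there is a finite $S\subseteq\mathbb{Z}$ with $|S|=p+1$ that is Sidon modulo $p^2+p+1$; and (ii) the subpolynomial prime gap hypothesis: for every real $\delta>0$ there exists $x_0$ such that for every natural number $x\ge x_0$ there is a prime $p$ with $x-x^{\delta}<p\le x$. Then for every real $\varepsilon>0$ there exist $C\ge0$ and $N_0\in\mathbb{N}$ such that $h(N)\ge\sqrt{N}-C N^{\varepsilon}$ for all $N\ge N_0$.
   Context: A finite set $A\subseteq\mathbb{Z}$ is Sidon if $a+b=c+d$ with $a,b,c,d\in A$ implies $\{a,b\}=\{c,d\}$ as unordered pairs; for a positive integer $M$ it is Sidon modulo $M$ if $M\mid (a+b)-(c+d)$ with $a,b,c,d\in A$ implies $\{a,b\}=\{c,d\}$ as unordered pairs. For a natural number $N$, $h(N)=\max\{|A| : A\subseteq\{1,\dots,N\},\ A\text{ Sidon}\}$. *)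

From Stdlib Require Import Reals ZArith List Lia.
Open Scope R_scope.

(* Finite sets of integers are represented by duplicate-free lists. *)

Definition Sidon (A : list Z) : Prop :=
  forall a b c d, In a A -> In b A -> In c A -> In d A ->
    (a + b = c + d)%Z -> (a = c /\ b = d) \/ (a = d /\ b = c).

Definition SidonMod (M : Z) (A : list Z) : Prop :=
  forall a b c d, In a A -> In b A -> In c A -> In d A ->
    Z.divide M ((a + b) - (c + d))%Z -> (a = c /\ b = d) \/ (a = d /\ b = c).

Definition SidonIn (N k : nat) : Prop :=
  exists A : list Z, NoDup A /\ length A = k /\
    (forall a, In a A -> (1 <= a <= Z.of_nat N)%Z) /\ Sidon A.

Definition is_h (N k : nat) : Prop :=
  SidonIn N k /\ (forall k', SidonIn N k' -> (k' <= k)%nat).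

Definition prime_nat (p : nat) : Prop := Znumtheory.prime (Z.of_nat p).

Definition SingerHyp : Prop :=
  forall p : nat, prime_nat p ->
    exists S : list Z, NoDup S /\ length S = (p + 1)%nat /\
      SidonMod (Z.of_nat (p * p + p + 1)) S.

Definition PrimeGapHyp : Prop :=
  forall delta : R, delta > 0 -> exists x0 : R,
    forall x : nat, INR x >= x0 ->
      exists p : nat, prime_nat p /\
        INR x - Rpower (INR x) delta < INR p /\ (p <= x)%nat.

From Stdlib Require Import Reals ZArith List Lia Lra.
Open Scope R_scope.

(* Reducing a Singer set for a prime p modulo m = p^2 + p + 1 gives a Sidon set of p + 1
   elements in {1, ..., m}, so h(N) >= p + 1 as soon as p^2 + p + 1 <= N.  The prime gap
   hypothesis gives such a p in (x - x^eps, x] for x = floor(sqrt N) - 1, whence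
   h(N) >= sqrt N - 2 N^eps. *)

Lemma SidonMod_shifted_residues (m : Z) (S : list Z) :
  (0 < m)%Z -> SidonMod m S -> forall a b c d, In a S -> In b S -> In c S -> In d S ->
  (a mod m + 1 + (b mod m + 1) = c mod m + 1 + (d mod m + 1))%Z ->
  (a = c /\ b = d) \/ (a = d /\ b = c).
Proof.
  intros Hm HS a b c d Ha Hb Hc Hd E.
  apply HS; auto.
  exists (a / m + b / m - c / m - d / m)%Z.
  pose proof (Z.div_mod a m ltac:(lia)).
  pose proof (Z.div_mod b m ltac:(lia)).
  pose proof (Z.div_mod c m ltac:(lia)).
  pose proof (Z.div_mod d m ltac:(lia)).
  nia.
Qed.

Lemma SidonIn_of_SidonMod (m : nat) (S : list Z) :
  (0 < m)%nat -> NoDup S -> SidonMod (Z.of_nat m) S -> SidonIn m (length S).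
Proof.
  intros Hm HND HS.
  pose proof (SidonMod_shifted_residues (Z.of_nat m) S ltac:(lia) HS) as Hres.
  exists (map (fun s => (s mod Z.of_nat m + 1)%Z) S).
  split; [|split; [|split]].
  - apply NoDup_map_NoDup_ForallPairs; auto.
    intros a c Ha Hc E.
    destruct (Hres a a c a Ha Ha Hc Ha) as [[? ?]|[? ?]]; auto; lia.
  - apply length_map.
  - intros a Ha. apply in_map_iff in Ha as [s [<- _]].
    pose proof (Z.mod_pos_bound s (Z.of_nat m) ltac:(lia)). lia.
  - intros a b c d Ha Hb Hc Hd E.
    apply in_map_iff in Ha as [a' [<- Ha]].
    apply in_map_iff in Hb as [b' [<- Hb]].
    apply in_map_iff in Hc as [c' [<- Hc]].
    apply in_map_iff in Hd as [d' [<- Hd]].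
    destruct (Hres a' b' c' d' Ha Hb Hc Hd E) as [[-> ->]|[-> ->]]; auto.
Qed.

Lemma SidonIn_mono (N N' k : nat) : (N <= N')%nat -> SidonIn N k -> SidonIn N' k.
Proof.
  intros HN [A [HND [HL [Hrange HA]]]].
  exists A. split; [|split; [|split]]; auto.
  intros a Ha. specialize (Hrange a Ha). lia.
Qed.

Lemma singer_h_lower_bound (p N k : nat) :
  SingerHyp -> prime_nat p -> (p * p + p + 1 <= N)%nat -> is_h N k -> (p + 1 <= k)%nat.
Proof.
  intros HS Hp HN [_ Hmax].
  destruct (HS p Hp) as [S [HND [HL HSm]]].
  apply Hmax, (SidonIn_mono (p * p + p + 1)); auto.
  rewrite <- HL. apply SidonIn_of_SidonMod; auto; lia.
Qed.

Lemma sqrt_lt_nat_sqrt_succ (N : nat) : sqrt (INR N) < INR (Nat.sqrt N) + 1.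
Proof.
  set (s := Nat.sqrt N).
  assert (Hs : (N < S s * S s)%nat) by apply Nat.sqrt_spec'.
  assert (HsR : INR N < (INR s + 1) * (INR s + 1)).
  { rewrite <- S_INR, <- mult_INR. apply lt_INR, Hs. }
  rewrite <- (sqrt_square (INR s + 1)) by (pose proof (pos_INR s); lra).
  apply sqrt_lt_1_alt. split; [apply pos_INR | exact HsR].
Qed.

(* The "- 1" and "+ 1" in the shifted window are absorbed by 1 <= N^eps, at the cost of
   the factor 2; this needs x >= 1, since Rpower 0 eps is the junk value exp 0 = 1. *)
Lemma window_below_sqrt (N x p : nat) (eps : R) :
  0 <= eps -> (1 <= x)%nat -> Nat.sqrt N = S x ->
  INR x - Rpower (INR x) eps < INR p -> sqrt (INR N) - 2 * Rpower (INR N) eps < INR (p + 1).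
Proof.
  intros Heps Hx Hs Hp.
  pose proof (sqrt_lt_nat_sqrt_succ N) as HsqN. rewrite Hs, S_INR in HsqN.
  assert (Hx1 : 1 <= INR x) by (apply (le_INR 1); exact Hx).
  assert (HxN : INR x <= INR N).
  { apply le_INR. pose proof (Nat.sqrt_spec' N). nia. }
  assert (Hpow : Rpower (INR x) eps <= Rpower (INR N) eps) by (apply Rle_Rpower_l; lra).
  assert (Hpow1 : 1 <= Rpower (INR N) eps).
  { rewrite <- (Rpower_O (INR N)) by lra. apply Rle_Rpower; lra. }
  rewrite plus_INR. simpl. lra.
Qed.

Theorem mainTheorem14 :
  SingerHyp -> PrimeGapHyp ->
  forall eps : R, eps > 0 ->
    exists (C : R) (N0 : nat), C >= 0 /\
      forall N k : nat, (N >= N0)%nat -> is_h N k ->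
        INR k >= sqrt (INR N) - C * Rpower (INR N) eps.
Proof.
  intros HS HG eps Heps.
  destruct (HG eps Heps) as [x0 Hx0].
  destruct (INR_archimed 1 x0 ltac:(lra)) as [M HM].
  exists 2, ((M + 2) * (M + 2))%nat. split; [lra|].
  intros N k HN Hk.
  assert (Hs : (M + 2 <= Nat.sqrt N)%nat).
  { rewrite <- (Nat.sqrt_square (M + 2)). apply Nat.sqrt_le_mono, HN. }
  set (x := (Nat.sqrt N - 1)%nat).
  assert (HxM : INR x >= x0).
  { assert (INR M <= INR x) by (apply le_INR; unfold x; lia). lra. }
  destruct (Hx0 x HxM) as [p [Hp [Hwindow Hpx]]].
  assert (Hpk : (p + 1 <= k)%nat).
  { apply (singer_h_lower_bound p N k HS Hp); auto.
    pose proof (Nat.sqrt_spec' N). unfold x in Hpx. nia. }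
  apply le_INR in Hpk.
  enough (sqrt (INR N) - 2 * Rpower (INR N) eps < INR (p + 1)) by lra.
  apply window_below_sqrt with x; unfold x; try lia; [lra | exact Hwindow].
Qed.
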